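(* Let $\ell \ge 1$ and let $\mathcal{O} = \{\mathbf{p}^t, \mathbf{x}^t\}_{t=1}^T$ be a data set with $\mathbf{p}^t \in \mathbb{R}^\ell_{++}$ and $\mathbf{x}^t \in \mathbb{R}^\ell_+ \setminus \{\mathbf{0}\}$ for all $t$, and let $\mathbf{e} = \{e^t\}_{t=1}^T$ with $e^t \in (0,1]$ for all $t$. Then $\mathcal{O}$ obeys $\mathbf{e}$-GARP whenever any of the following conditions holds: (i) there is a consumption space $X \subseteq \mathbb{R}^\ell_+$ (containing all $\mathbf{x}^t$) and a utility function $U : X \to \mathbb{R}$ that both $\mathbf{e}$-rationalizes and $\mathbf{e}$-cost-rationalizes $\mathcal{O}$ (on $X$); (ii) $\mathcal{O}$ is $\mathbf{e}$-rationalizable (on $X=\mathbb{R}^\ell_+$) by a locally nonsatiated utility function $U : \mathbb{R}^\ell_+ \to \mathbb{R}$; (iii) $\mathcal{O}$ is $\mathbf{e}$-cost-rationalizable (on $X=\mathbb{R}^\ell_+$) by a continuous utility function $U : \mathbb{R}^\ell_+ \to \mathbb{R}$.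
   Context: For a consumption space $X\subseteq\mathbb{R}^\ell_+$ and $U:X\to\mathbb{R}$: $U$ $\mathbf{e}$-rationalizes $\mathcal{O}$ if for every $t$, $U(\mathbf{x}^t)\ge U(\mathbf{x})$ for all $\mathbf{x}\in X$ with $\mathbf{p}^t\cdot\mathbf{x}\le e^t\,\mathbf{p}^t\cdot\mathbf{x}^t$; $U$ $\mathbf{e}$-cost-rationalizes $\mathcal{O}$ if for every $t$, $e^t\,\mathbf{p}^t\cdot\mathbf{x}^t\le\mathbf{p}^t\cdot\mathbf{x}$ for all $\mathbf{x}\in X$ with $U(\mathbf{x})\ge U(\mathbf{x}^t)$. $U$ is locally nonsatiated if for every $\mathbf{x}$ and $\varepsilon>0$ there is $\mathbf{y}$ with $\|\mathbf{y}-\mathbf{x}\|<\varepsilon$ and $U(\mathbf{y})>U(\mathbf{x})$. Revealed preference relations: $\mathbf{x}^t \succcurlyeq_0^* \mathbf{x}^s$ (directly revealed preferred) if $\mathbf{p}^t\cdot\mathbf{x}^s \le e^t\,\mathbf{p}^t\cdot\mathbf{x}^t$; $\mathbf{x}^t \succ_0^* \mathbf{x}^s$ (strictly directly revealed preferred) if $\mathbf{p}^t\cdot\mathbf{x}^s < e^t\,\mathbf{p}^t\cdot\mathbf{x}^t$; $\mathbf{x}^t \succcurlyeq^* \mathbf{x}^s$ (revealed preferred) if there is a finite chain $\mathbf{x}^t \succcurlyeq_0^* \mathbf{x}^i \succcurlyeq_0^* \cdots \succcurlyeq_0^* \mathbf{x}^s$ among the observed bundles. $\mathcal{O}$ obeys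 $\mathbf{e}$-GARP if for all $t,s$, $\mathbf{x}^t \succcurlyeq^* \mathbf{x}^s$ implies that $\mathbf{x}^s \succ_0^* \mathbf{x}^t$ does not hold. *)

From HB Require Import structures.
From mathcomp Require Import all_boot all_order all_algebra.
From mathcomp Require Import all_classical all_reals all_analysis.
From Stdlib Require Import Relation_Operators.
Set Implicit Arguments. Unset Strict Implicit. Unset Printing Implicit Defensive.
Import Order.TTheory GRing.Theory Num.Theory.
Import numFieldNormedType.Exports.
Local Open Scope classical_set_scope.
Local Open Scope ring_scope.

Section Defs.
Variables (R : realType) (l : nat).

Definition dotp (p x : 'rV[R]_l) : R := \sum_(i < l) p ord0 i * x ord0 i.

Definition edist (x y : 'rV[R]_l) : R :=
  Num.sqrt (\sum_(i < l) (y ord0 i - x ord0 i) ^+ 2).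

Definition nonneg_orthant : set 'rV[R]_l := [set x | forall i, 0 <= x ord0 i].
Definition pos_orthant : set 'rV[R]_l := [set x | forall i, 0 < x ord0 i].

Variables (T : nat) (p x : 'I_T -> 'rV[R]_l) (e : 'I_T -> R).

Definition e_rationalizes (X : set 'rV[R]_l) (U : 'rV[R]_l -> R) : Prop :=
  forall t, forall y, X y -> dotp (p t) y <= e t * dotp (p t) (x t) ->
    U y <= U (x t).

Definition e_cost_rationalizes (X : set 'rV[R]_l) (U : 'rV[R]_l -> R) : Prop :=
  forall t, forall y, X y -> U (x t) <= U y ->
    e t * dotp (p t) (x t) <= dotp (p t) y.

Definition locally_nonsatiated (X : set 'rV[R]_l) (U : 'rV[R]_l -> R) : Prop :=
  forall z, X z -> forall eps : R, 0 < eps ->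
    exists y, X y /\ edist z y < eps /\ U z < U y.

Definition dir_rev_pref (t s : 'I_T) : Prop :=
  dotp (p t) (x s) <= e t * dotp (p t) (x t).
Definition strict_dir_rev_pref (t s : 'I_T) : Prop :=
  dotp (p t) (x s) < e t * dotp (p t) (x t).
Definition rev_pref : 'I_T -> 'I_T -> Prop := clos_trans _ dir_rev_pref.

Definition e_GARP : Prop :=
  forall t s, rev_pref t s -> ~ strict_dir_rev_pref s t.

End Defs.

From Pilot Require Import Defs.
From HB Require Import structures.
From mathcomp Require Import all_boot all_order all_algebra.
From mathcomp Require Import all_classical all_reals all_analysis.
From mathcomp Require Import lra.

Set Implicit Arguments.
Unset Strict Implicit.
Unset Printing Implicit Defensive.
Import Order.TTheory GRing.Theory Num.Theory.
Import numFieldNormedType.Exports.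
Local Open Scope classical_set_scope.
Local Open Scope ring_scope.

(* e-GARP holds as soon as some utility U weakly increases along direct revealed
   preference and strictly along strict direct revealed preference: U cannot
   increase along a chain from x^t to x^s, so a strict direct revealed
   preference of x^s over x^t would give U(x^t) < U(x^s) <= U(x^t).
   In (i), e-rationalization yields the weak half and e-cost-rationalization
   the strict one.  In (ii), the strict half comes from local nonsatiation: if
   p^s.x^t < e^s p^s.x^s, bundles near x^t are still affordable and some of them
   beat x^t.  In (iii), the weak half comes from continuity: if x^s beat an x^t
   with p^t.x^s <= e^t p^t.x^t, so would k x^s for some k < 1, which costs
   strictly less than e^t p^t.x^t because p^t.x^s > 0. *)

Section Dotp.
Variables (R : realType) (l : nat).
Implicit Types q y z : 'rV[R]_l.

Lemma dotpZ q y k : dotp q (k *: y) = k * dotp q y.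
Proof. by rewrite /dotp mulr_sumr; apply: eq_bigr => i _; rewrite mxE mulrCA. Qed.

Lemma dotp_gt0 q y : pos_orthant q -> nonneg_orthant y -> y <> 0 -> 0 < dotp q y.
Proof.
move=> q_gt0 y_ge0 y_neq0.
have [i yi_neq0] : exists i, y ord0 i != 0.
  apply/not_existsP => y_eq0; apply: y_neq0; apply/matrixP => a b.
  by rewrite (ord1 a) !mxE; apply/eqP/negPn/negP; apply: y_eq0.
have yi_gt0 : 0 < y ord0 i by rewrite lt_def yi_neq0 y_ge0.
rewrite /dotp (bigD1 i) //= ltr_pwDl ?mulr_gt0 //.
by apply: sumr_ge0 => j _; rewrite mulr_ge0 // ltW.
Qed.

Lemma edist_ge_coord y z i : `|z ord0 i - y ord0 i| <= Defs.edist y z.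
Proof.
rewrite /Defs.edist -sqrtr_sqr ler_sqrt; last by apply: sumr_ge0 => j _; exact: sqr_ge0.
by rewrite (bigD1 i) //= lerDl; apply: sumr_ge0 => j _; exact: sqr_ge0.
Qed.

Lemma dotpB_le_edist q y z : pos_orthant q ->
  dotp q z - dotp q y <= (\sum_(i < l) q ord0 i) * Defs.edist y z.
Proof.
move=> q_gt0; rewrite /dotp -sumrB mulr_suml; apply: ler_sum => i _.
rewrite -mulrBr (le_trans (ler_norm _)) // normrM ger0_norm; last exact: ltW.
by apply: ler_wpM2l; [exact: ltW | exact: edist_ge_coord].
Qed.

Lemma dotp_lt_near q z c : pos_orthant q -> dotp q z < c ->
  exists2 d : R, 0 < d & forall y, Defs.edist z y < d -> dotp q y < c.
Proof.
move=> q_gt0 qz_lt_c; set P := \sum_(i < l) q ord0 i.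
have P_ge0 : 0 <= P by apply: sumr_ge0 => i _; exact: ltW.
exists ((c - dotp q z) / (1 + P)) => [|y zy_lt].
  by rewrite divr_gt0 ?subr_gt0 // ltr_pwDl.
have zy_ge0 : 0 <= Defs.edist z y by apply: sqrtr_ge0.
have : (1 + P) * Defs.edist z y < c - dotp q z by rewrite mulrC -ltr_pdivlMr ?ltr_pwDl.
have := dotpB_le_edist z y q_gt0; rewrite -/P; nra.
Qed.

End Dotp.

Lemma continuous_within_shrink_gt (R : realType) (V : normedModType R)
    (A : set V) (U : V -> R) z c :
  {within A, continuous U} -> A z -> (forall k, 0 <= k <= 1 -> A (k *: z)) ->
  c < U z -> exists k, 0 <= k < 1 /\ c < U (k *: z).
Proof.
move=> U_cont Az A_shrink c_lt_Uz.
have U_cvg : from_subspace A U y @[y --> within A (nbhs z)] --> U z.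
  by have := U_cont z; rewrite /continuous_at nbhs_subspace_in.
have Ugt : \forall y \near within A (nbhs z), c < from_subspace A U y.
  exact: cvgr_gt c_lt_Uz.
have scale_cvg : k *: z @[k --> (1 : R)] --> z.
  by rewrite -{2}(scale1r z); apply: cvgZr_tmp; exact: cvg_id.
have /nbhs_ballP[d /= d_gt0 near1] := scale_cvg _ Ugt.
have [k [k_ge0 k_lt1 k_near1]] : exists k : R, [/\ 0 <= k, k < 1 & `|1 - k| < d].
  by case: (leP d 1) => d1; [exists (1 - d / 2) | exists (1 / 2)];
     rewrite ger0_norm; try split; lra.
have Akz : A (k *: z) by apply: A_shrink; lra.
have k_ball : ball (1 : R) d k by exact: k_near1.
by exists k; rewrite k_ge0 k_lt1; split=> //; exact: near1 k_ball Akz.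
Qed.

Section Revealed.
Variables (R : realType) (l T : nat).
Variables (p x : 'I_T -> 'rV[R]_l) (e : 'I_T -> R).

Lemma e_GARP_of_utility (U : 'rV[R]_l -> R) :
  (forall t s, dir_rev_pref p x e t s -> U (x s) <= U (x t)) ->
  (forall s t, strict_dir_rev_pref p x e s t -> U (x t) < U (x s)) ->
  e_GARP p x e.
Proof.
move=> U_weak U_strict t s ts st.
have : U (x s) <= U (x t).
  by elim: ts => [a b /U_weak // | a b c _ ab _ bc]; exact: le_trans bc ab.
by rewrite leNgt U_strict.
Qed.

Lemma e_cost_rationalizes_strict_dir_rev_pref (X : set 'rV[R]_l) U s t :
  e_cost_rationalizes p x e X U -> X (x t) ->
  strict_dir_rev_pref p x e s t -> U (x t) < U (x s).
Proof.
move=> U_cost Xxt st; rewrite ltNge; apply/negP => Uxs_le.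
by have := U_cost s _ Xxt Uxs_le; rewrite leNgt st.
Qed.

Lemma locally_nonsatiated_strict_dir_rev_pref (U : 'rV[R]_l -> R) s t :
  pos_orthant (p s) -> nonneg_orthant (x t) ->
  locally_nonsatiated (@nonneg_orthant R l) U ->
  e_rationalizes p x e (@nonneg_orthant R l) U ->
  strict_dir_rev_pref p x e s t -> U (x t) < U (x s).
Proof.
move=> ps_gt0 xt_ge0 U_lns U_rat st.
have [d d_gt0 cheap] := dotp_lt_near ps_gt0 st.
have [y [y_ge0 [xty_lt Uxt_lt]]] := U_lns _ xt_ge0 _ d_gt0.
by rewrite (lt_le_trans Uxt_lt) // U_rat // ltW // cheap.
Qed.

Lemma continuous_cost_dir_rev_pref (U : 'rV[R]_l -> R) t s :
  pos_orthant (p t) -> nonneg_orthant (x s) -> x s <> 0 ->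
  {within @nonneg_orthant R l, continuous U} ->
  e_cost_rationalizes p x e (@nonneg_orthant R l) U ->
  dir_rev_pref p x e t s -> U (x s) <= U (x t).
Proof.
move=> pt_gt0 xs_ge0 xs_neq0 U_cont U_cost ts; rewrite leNgt; apply/negP => Uxt_lt.
have shrink k : 0 <= k <= 1 -> nonneg_orthant (k *: x s).
  by move=> /andP[k_ge0 _] i; rewrite mxE mulr_ge0.
have [k [/andP[k_ge0 k_lt1] Ukxs_gt]] :=
  continuous_within_shrink_gt U_cont xs_ge0 shrink Uxt_lt.
have kxs_ge0 : nonneg_orthant (k *: x s) by apply: shrink; rewrite k_ge0 ltW.
have := U_cost t _ kxs_ge0 (ltW Ukxs_gt); rewrite dotpZ.
have := dotp_gt0 pt_gt0 xs_ge0 xs_neq0; move: ts; rewrite /dir_rev_pref; nra.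
Qed.

End Revealed.

Theorem proposition2 (R : realType) (l T : nat) (hl : (1 <= l)%N)
    (p x : 'I_T -> 'rV[R]_l) (e : 'I_T -> R)
    (hp : forall t, pos_orthant (p t))
    (hx : forall t, nonneg_orthant (x t) /\ x t <> 0)
    (he : forall t, 0 < e t <= 1) :
  ((exists (X : set 'rV[R]_l) (U : 'rV[R]_l -> R),
       X `<=` nonneg_orthant (R:=R) (l:=l) /\ (forall t, X (x t)) /\
       e_rationalizes p x e X U /\ e_cost_rationalizes p x e X U)
   \/ (exists U : 'rV[R]_l -> R,
       locally_nonsatiated (@nonneg_orthant R l) U /\
       e_rationalizes p x e (@nonneg_orthant R l) U)
   \/ (exists U : 'rV[R]_l -> R,
       {within @nonneg_orthant R l, continuous U} /\
       e_cost_rationalizes p x e (@nonneg_orthant R l) U)) ->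
  e_GARP p x e.
Proof.
case=> [[X [U [_ [Xx [U_rat U_cost]]]]] | [[U [U_lns U_rat]] | [U [U_cont U_cost]]]].
- apply: (e_GARP_of_utility (U := U)) => [t s ts | s t].
    exact: U_rat (Xx s) ts.
  exact: e_cost_rationalizes_strict_dir_rev_pref U_cost (Xx t).
- apply: (e_GARP_of_utility (U := U)) => [t s ts | s t].
    exact: U_rat (hx s).1 ts.
  exact: locally_nonsatiated_strict_dir_rev_pref (hp s) (hx t).1 U_lns U_rat.
- apply: (e_GARP_of_utility (U := U)) => [t s | s t].
    exact: continuous_cost_dir_rev_pref (hp t) (hx s).1 (hx s).2 U_cont U_cost.
  exact: e_cost_rationalizes_strict_dir_rev_pref U_cost (hx t).1.
Qed.
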